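(* Let $(a_i)_{i\ge0}$ be positive integers with $a_{2k}=1$ for all $k\geq0$ (the $a_{2k+1}$ arbitrary positive integers). Let $\ell$ be the irrational number with simple continued fraction $[a_0;a_1,a_2,\dots]$ and set $\theta=e^{2/\ell}$. Then $\mathcal A_\theta=\emptyset$. In particular, for every positive integer $c$, if $\theta=e^{-c+\sqrt{c(c+4)}}$ then $\mathcal A_\theta=\emptyset$.
   Context: $\lfloor x\rfloor$ is the floor of $x$; $\log$ is the natural logarithm. For real $\theta>1$ and positive integer $n$, $M'_\theta(n)=\left\lfloor 1/(\theta^{1/n}-1)\right\rfloor$, and $\mathcal A_\theta=\{n\in\mathbb N: M'_\theta(n)\neq \lfloor n/\log\theta-1/2\rfloor\}$, where $\mathbb N$ is the set of positive integers. $[a_0;a_1,a_2,\dots]$ denotes an infinite simple continued fraction. *)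

From Stdlib Require Import Reals ZArith.
Open Scope R_scope.

(* floor of a real number: up x is the unique integer with x < up x <= x + 1 *)
Definition Rfloor (x : R) : Z := (up x - 1)%Z.

Definition Mprime (theta : R) (n : nat) : Z :=
  Rfloor (/ (Rpower theta (/ INR n) - 1)).

Definition in_A (theta : R) (n : nat) : Prop :=
  (0 < n)%nat /\ Mprime theta n <> Rfloor (INR n / ln theta - / 2).

(* finite continued fraction [a_k; a_{k+1}, ..., a_{k+n}] *)
Fixpoint cf_fin (a : nat -> nat) (k n : nat) : R :=
  match n with
  | O => INR (a k)
  | S m => INR (a k) + / cf_fin a (S k) m
  end.

Definition cf_value (a : nat -> nat) (l : R) : Prop :=
  Un_cv (fun n => cf_fin a 0 n) l.

(* Put x = 2/(n l), so that theta^(1/n) = e^x and n / log theta - 1/2 = 1/x - 1/2.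
   Since 1/x - 1/2 < 1/(e^x - 1) < 1/x - 1/2 + x/12, the two floors can only differ
   if an integer k satisfies n l < 2k + 1 < n l + 1/(3 n l), i.e. if some odd p has
   0 < n (p - n l) < 1/(3 l) <= 1/3.  This is excluded by the property
   "q (p - q x) >= 1/3 whenever q x < p", which holds for 1 and is preserved by
   y |-> [1; A, y]: writing p = q + r and s = q - r A, one has
   (A y + 1) (p - q [1; A, y]) = r - s y, and either s <= 0 (a concavity argument
   in q) or 0 < s < q (descent to the pair (s, r) for y).  Hence the property holds
   for the even convergents, for their limit, and for the purely periodic
   [1; c, 1, c, ...] = 2 / (-c + sqrt (c (c + 4))). *)

From Stdlib Require Import Reals ZArith Lra Lia Psatz.
From Coquelicot Require Import Coquelicot.
Open Scope R_scope.

Lemma pos_of_deriv_pos (f df : R -> R) :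
  f 0 = 0 -> (forall x, 0 <= x -> is_derive f x (df x)) ->
  (forall x, 0 < x -> 0 < df x) -> forall x, 0 < x -> 0 < f x.
Proof.
  intros f0 f_df df_pos x x_pos.
  destruct (MVT_cor2 f df 0 x x_pos) as [c [f_mvt c_in]].
  { intros c c_in. apply is_derive_Reals, f_df. lra. }
  assert (0 < df c) by (apply df_pos; lra).
  rewrite f0 in f_mvt. nra.
Qed.

Lemma exp_pade_lower x : 0 < x -> (2 - x) * exp x < 2 + x.
Proof.
  assert (H1 : forall x, 0 < x -> 0 < 1 - (1 - x) * exp x).
  { apply (pos_of_deriv_pos _ (fun x => x * exp x)).
    - rewrite exp_0. ring.
    - intros t _. auto_derive; auto. ring.
    - intros t t_pos. apply Rmult_lt_0_compat; [exact t_pos | apply exp_pos]. }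
  assert (H0 : forall x, 0 < x -> 0 < (2 + x) - (2 - x) * exp x).
  { apply (pos_of_deriv_pos _ (fun x => 1 - (1 - x) * exp x)).
    - rewrite exp_0. ring.
    - intros t _. auto_derive; auto. ring.
    - exact H1. }
  intros x_pos. specialize (H0 x x_pos). lra.
Qed.

Lemma exp_pade_upper x : 0 < x -> 12 * x < (exp x - 1) * (x * x - 6 * x + 12).
Proof.
  assert (H2 : forall x, 0 < x -> 0 < exp x * (x * x - 2 * x + 2) - 2).
  { apply (pos_of_deriv_pos _ (fun x => exp x * (x * x))).
    - rewrite exp_0. ring.
    - intros t _. auto_derive; auto. ring.
    - intros t t_pos. apply Rmult_lt_0_compat; [apply exp_pos | nra]. }
  assert (H1 : forall x, 0 < x -> 0 < exp x * (x * x - 4 * x + 6) - 2 * x - 6).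
  { apply (pos_of_deriv_pos _ (fun x => exp x * (x * x - 2 * x + 2) - 2)).
    - rewrite exp_0. ring.
    - intros t _. auto_derive; auto. ring.
    - exact H2. }
  assert (H0 : forall x, 0 < x -> 0 < (exp x - 1) * (x * x - 6 * x + 12) - 12 * x).
  { apply (pos_of_deriv_pos _ (fun x => exp x * (x * x - 4 * x + 6) - 2 * x - 6)).
    - rewrite exp_0. ring.
    - intros t _. auto_derive; auto. ring.
    - exact H1. }
  intros x_pos. specialize (H0 x x_pos). lra.
Qed.

Lemma inv_exp_sub1_bounds x :
  0 < x -> / x - / 2 < / (exp x - 1) < / x - / 2 + x / 12.
Proof.
  intros x_pos.
  pose proof (exp_pade_lower x x_pos) as lower.
  pose proof (exp_pade_upper x x_pos) as upper.
  assert (exp_gt1 : 1 < exp x) by (rewrite <- exp_0; apply exp_increasing; lra).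
  split.
  - assert (Hid : / (exp x - 1) - (/ x - / 2)
                  = (2 * x - (2 - x) * (exp x - 1)) / (2 * x * (exp x - 1)))
      by (field; lra).
    assert (0 < (2 * x - (2 - x) * (exp x - 1)) / (2 * x * (exp x - 1)))
      by (apply Rdiv_lt_0_compat; nra).
    lra.
  - assert (Hid : (/ x - / 2 + x / 12) - / (exp x - 1)
                  = ((exp x - 1) * (x * x - 6 * x + 12) - 12 * x) / (12 * x * (exp x - 1)))
      by (field; lra).
    assert (0 < ((exp x - 1) * (x * x - 6 * x + 12) - 12 * x) / (12 * x * (exp x - 1)))
      by (apply Rdiv_lt_0_compat; nra).
    lra.
Qed.

Lemma Rfloor_spec x : IZR (Rfloor x) <= x < IZR (Rfloor x) + 1.
Proof.
  unfold Rfloor. rewrite minus_IZR. destruct (archimed x). lra.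
Qed.

Lemma Rfloor_unique x k : IZR k <= x < IZR k + 1 -> Rfloor x = k.
Proof.
  intros Hk. unfold Rfloor.
  rewrite <- (up_tech x k); [ring | lra | rewrite plus_IZR; lra].
Qed.

Lemma Rfloor_eq_no_int_between x y :
  x <= y -> (forall k, x < IZR k -> y < IZR k) -> Rfloor y = Rfloor x.
Proof.
  intros xy no_int. pose proof (Rfloor_spec x) as Hx.
  apply Rfloor_unique. split; [lra|].
  rewrite <- plus_IZR. apply no_int. rewrite plus_IZR. lra.
Qed.

Definition upper_gap_third (x : R) : Prop :=
  forall q p : Z, (1 <= q)%Z -> IZR q * x < IZR p ->
    1 / 3 <= IZR q * (IZR p - IZR q * x).

Lemma not_in_A_of_upper_gap_third l n :
  1 <= l -> upper_gap_third l -> ~ in_A (exp (2 / l)) n.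
Proof.
  intros l_ge1 gap [n_pos floor_neq]. apply floor_neq.
  assert (N_ge1 : 1 <= INR n) by (apply (le_INR 1); lia).
  set (x := / INR n * (2 / l)).
  assert (x_pos : 0 < x).
  { apply Rmult_lt_0_compat; [apply Rinv_0_lt_compat | apply Rdiv_lt_0_compat]; lra. }
  assert (inv_x : / x = INR n * l / 2) by (unfold x; field; lra).
  unfold Mprime, Rpower. rewrite ln_exp. fold x.
  replace (INR n / (2 / l) - / 2) with (/ x - / 2) by (rewrite inv_x; field; lra).
  destruct (inv_exp_sub1_bounds x x_pos) as [lower upper].
  apply Rfloor_eq_no_int_between; [lra|].
  intros k k_gt. apply Rnot_le_lt. intros k_le.
  assert (odd_gt : IZR (Z.of_nat n) * l < IZR (2 * k + 1)).
  { rewrite <- INR_IZR_INZ, plus_IZR, mult_IZR. lra. }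
  specialize (gap (Z.of_nat n) (2 * k + 1)%Z ltac:(lia) odd_gt).
  rewrite <- INR_IZR_INZ, plus_IZR, mult_IZR in gap.
  assert (n_x : INR n * x = 2 / l) by (unfold x; field; lra).
  assert (two_div_l : 2 / l <= 2).
  { apply (Rmult_le_reg_r l); [lra|]. unfold Rdiv. rewrite Rmult_assoc, Rinv_l; lra. }
  nra.
Qed.

Lemma upper_gap_third_1 : upper_gap_third 1.
Proof.
  intros q p q_ge1 qp. rewrite Rmult_1_r in *.
  assert (r_ge1 : (1 <= p - q)%Z) by (apply lt_IZR in qp; lia).
  apply IZR_le in r_ge1, q_ge1. rewrite minus_IZR in r_ge1. nra.
Qed.

Lemma quadratic_ge_of_endpoints (b lo hi Q r c : R) :
  0 <= b -> lo <= Q <= hi -> c <= lo * (r - lo * b) -> c <= hi * (r - hi * b) ->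
  c <= Q * (r - Q * b).
Proof.
  intros b_ge0 Q_in f_lo f_hi.
  destruct (Req_dec lo hi) as [<- | lo_hi]; [replace Q with lo by lra; exact f_lo|].
  (* a concave quadratic lies above its chord *)
  assert (chord : (hi - lo) * (Q * (r - Q * b) - c)
                  = (hi - Q) * (lo * (r - lo * b) - c) + (Q - lo) * (hi * (r - hi * b) - c)
                    + (hi - lo) * ((Q - lo) * (hi - Q) * b)) by ring.
  assert (0 <= (Q - lo) * (hi - Q) * b) by (apply Rmult_le_pos; nra).
  nra.
Qed.

Definition cf_cons1 (A : nat) (y : R) : R := 1 + / (INR A + / y).

Lemma cf_cons1_bounds A y : (0 < A)%nat -> 0 < y -> 1 < cf_cons1 A y <= 2.
Proof.
  intros A_pos y_pos.
  assert (A_ge1 : 1 <= INR A) by (apply (le_INR 1); lia).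
  assert (0 < / y) by (apply Rinv_0_lt_compat; lra).
  assert (0 < / (INR A + / y)) by (apply Rinv_0_lt_compat; lra).
  assert (/ (INR A + / y) <= 1) by (rewrite <- Rinv_1; apply Rinv_le_contravar; lra).
  unfold cf_cons1. lra.
Qed.

Lemma cf_cons1_gap A y q p : 0 < y ->
  IZR p - IZR q * cf_cons1 A y
  = (IZR (p - q) - IZR (q - (p - q) * Z.of_nat A) * y) / (INR A * y + 1).
Proof.
  intros y_pos. pose proof (pos_INR A).
  rewrite !minus_IZR, mult_IZR, minus_IZR, <- INR_IZR_INZ.
  assert (0 < / y) by (apply Rinv_0_lt_compat; lra).
  unfold cf_cons1. field. repeat split; nra.
Qed.

Lemma upper_gap_case_nonpos (A y Q r S : R) :
  1 <= A -> 0 < y <= 2 -> 1 <= r -> Q = S + r * A -> 1 <= Q -> S <= 0 ->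
  1 / 3 <= Q * ((r - S * y) / (A * y + 1)).
Proof.
  intros A_ge1 y_in r_ge1 Q_def Q_ge1 S_le0.
  set (b := y / (A * y + 1)).
  assert (b_def : b * (A * y + 1) = y) by (unfold b; field; nra).
  assert (b_pos : 0 <= b) by (apply Rlt_le, Rdiv_lt_0_compat; nra).
  replace (Q * ((r - S * y) / (A * y + 1))) with (Q * (r - Q * b))
    by (subst Q; unfold b; field; nra).
  apply (quadratic_ge_of_endpoints b 1 (r * A)); [exact b_pos | lra | |].
  - assert (0 <= (A - 1) * y) by nra.
    assert (0 <= (2 / 3 - b) * (A * y + 1)) by lra.
    assert (b <= 2 / 3) by nra. lra.
  - assert (one_sub_Ab : (1 - A * b) * (A * y + 1) = 1) by nra.
    assert (1 <= r * r) by nra.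
    assert (1 / 3 <= A * (1 - A * b)) by nra.
    replace (r * A * (r - r * A * b)) with (r * r * (A * (1 - A * b))) by ring.
    nra.
Qed.

Lemma upper_gap_case_pos (A y Q r S : R) :
  0 <= A -> 0 < y -> Q = S + r * A -> 0 < r - S * y ->
  1 / 3 <= S * (r - S * y) -> 1 / 3 <= Q * ((r - S * y) / (A * y + 1)).
Proof.
  intros A_ge0 y_pos Q_def gap_pos gap_S.
  assert (Ay1_pos : 0 < A * y + 1) by nra.
  assert (descent : (A * y + 1) * (S * (r - S * y)) <= Q * (r - S * y)).
  { subst Q. assert (0 <= A * (r - S * y) * (r - S * y)) by (apply Rmult_le_pos; nra).
    nra. }
  assert (g_def : (r - S * y) / (A * y + 1) * (A * y + 1) = r - S * y) by (field; lra).
  set (g := (r - S * y) / (A * y + 1)) in *.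
  apply (Rmult_le_reg_l (A * y + 1)); [exact Ay1_pos|].
  replace ((A * y + 1) * (Q * g)) with (Q * (r - S * y)) by (rewrite <- g_def; ring).
  nra.
Qed.

Lemma upper_gap_cf_cons1 A y q p :
  (0 < A)%nat -> 0 < y <= 2 -> (1 <= q)%Z ->
  (forall s r, (1 <= s < q)%Z -> IZR s * y < IZR r ->
     1 / 3 <= IZR s * (IZR r - IZR s * y)) ->
  IZR q * cf_cons1 A y < IZR p -> 1 / 3 <= IZR q * (IZR p - IZR q * cf_cons1 A y).
Proof.
  intros A_pos y_in q_ge1 descent qp.
  assert (A_ge1 : 1 <= INR A) by (apply (le_INR 1); lia).
  assert (Ay1_pos : 0 < INR A * y + 1) by nra.
  assert (r_ge1 : (1 <= p - q)%Z).
  { destruct (cf_cons1_bounds A y A_pos ltac:(lra)) as [z_gt1 _].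
    apply IZR_le in q_ge1.
    assert (q < p)%Z by (apply lt_IZR; nra). lia. }
  pose proof (cf_cons1_gap A y q p ltac:(lra)) as gap_eq.
  assert (gap_pos : 0 < IZR p - IZR q * cf_cons1 A y) by lra.
  set (r := (p - q)%Z) in *. set (s := (q - r * Z.of_nat A)%Z) in *.
  rewrite gap_eq in gap_pos |- *.
  assert (q_def : IZR q = IZR s + IZR r * INR A).
  { unfold s. rewrite minus_IZR, mult_IZR, <- INR_IZR_INZ. ring. }
  destruct (Z_le_gt_dec s 0) as [s_le0 | s_pos].
  - apply (upper_gap_case_nonpos _ _ _ _ (IZR s)); try lra; apply IZR_le; lia.
  - assert (0 < IZR r - IZR s * y).
    { replace (IZR r - IZR s * y)
        with ((IZR r - IZR s * y) / (INR A * y + 1) * (INR A * y + 1)) by (field; lra).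
      apply Rmult_lt_0_compat; lra. }
    apply (upper_gap_case_pos _ _ _ _ (IZR s)); try lra.
    apply descent; [nia | lra].
Qed.

Lemma upper_gap_third_cf_cons1 A y :
  (0 < A)%nat -> 0 < y <= 2 -> upper_gap_third y -> upper_gap_third (cf_cons1 A y).
Proof.
  intros A_pos y_in gap q p q_ge1.
  apply upper_gap_cf_cons1; auto.
  intros s r [s_ge1 _]. exact (gap s r s_ge1).
Qed.

Lemma upper_gap_third_cf_cons1_fixed A l :
  (0 < A)%nat -> 0 < l <= 2 -> l = cf_cons1 A l -> upper_gap_third l.
Proof.
  intros A_pos l_in l_fixed q p q_ge1. revert p. revert q q_ge1.
  apply (Zlt_lower_bound_ind (fun q => forall p, IZR q * l < IZR p ->
                                1 / 3 <= IZR q * (IZR p - IZR q * l)) 1).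
  intros q IH q_ge1 p ql.
  rewrite l_fixed in ql |- *.
  apply upper_gap_cf_cons1; [exact A_pos | exact l_in | exact q_ge1 | | exact ql].
  intros s r s_in. exact (IH s s_in r).
Qed.

Lemma cf_fin_even_succ a k m : a (2 * k)%nat = 1%nat ->
  cf_fin a (2 * k) (2 * S m) = cf_cons1 (a (S (2 * k))) (cf_fin a (2 * S k) (2 * m)).
Proof.
  intros a_even.
  replace (2 * S m)%nat with (S (S (2 * m))) by lia.
  replace (2 * S k)%nat with (S (S (2 * k))) by lia.
  cbn [cf_fin]. rewrite a_even. reflexivity.
Qed.

Lemma cf_fin_even_upper_gap_third a :
  (forall i, (0 < a i)%nat) -> (forall k, a (2 * k)%nat = 1%nat) ->
  forall m k, 1 <= cf_fin a (2 * k) (2 * m) <= 2 /\ upper_gap_third (cf_fin a (2 * k) (2 * m)).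
Proof.
  intros a_pos a_even m. induction m as [|m IH]; intros k.
  - change (2 * 0)%nat with 0%nat. cbn [cf_fin]. rewrite a_even. simpl INR.
    split; [lra | exact upper_gap_third_1].
  - rewrite (cf_fin_even_succ a k m (a_even k)).
    destruct (IH (S k)) as [y_in gap].
    assert (y_pos : 0 < cf_fin a (2 * S k) (2 * m)) by lra.
    pose proof (cf_cons1_bounds (a (S (2 * k))) _ (a_pos _) y_pos).
    split; [lra|].
    apply upper_gap_third_cf_cons1; [apply a_pos | lra | exact gap].
Qed.

Lemma upper_gap_third_lim (u : nat -> R) (l : R) :
  (forall n, upper_gap_third (u n)) -> is_lim_seq u l -> upper_gap_third l.
Proof.
  intros gap u_lim q p q_ge1 ql.
  assert (Q_ge1 : 1 <= IZR q) by (apply IZR_le; exact q_ge1).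
  assert (gap_lim : is_lim_seq (fun n => IZR q * (IZR p - IZR q * u n))
                      (IZR q * (IZR p - IZR q * l))).
  { apply is_lim_seq_mult'; [apply is_lim_seq_const|].
    apply is_lim_seq_minus'; [apply is_lim_seq_const|].
    apply is_lim_seq_mult'; [apply is_lim_seq_const | exact u_lim]. }
  assert (eps_pos : 0 < (IZR p - IZR q * l) / IZR q) by (apply Rdiv_lt_0_compat; lra).
  assert (eventually_gap : eventually (fun n => 1 / 3 <= IZR q * (IZR p - IZR q * u n))).
  { destruct (proj2 (is_lim_seq_spec u l) u_lim (mkposreal _ eps_pos)) as [N close].
    exists N. intros n n_ge. apply gap; [exact q_ge1|].
    specialize (close n n_ge). simpl in close. apply Rabs_def2 in close.
    assert (IZR q * (u n - l) < IZR q * ((IZR p - IZR q * l) / IZR q))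
      by (apply Rmult_lt_compat_l; lra).
    replace (IZR q * ((IZR p - IZR q * l) / IZR q)) with (IZR p - IZR q * l) in * by (field; lra).
    lra. }
  exact (is_lim_seq_le_loc _ _ _ _ eventually_gap (is_lim_seq_const _) gap_lim).
Qed.

Lemma cf_value_upper_gap_third a l :
  (forall i, (0 < a i)%nat) -> (forall k, a (2 * k)%nat = 1%nat) ->
  cf_value a l -> 1 <= l /\ upper_gap_third l.
Proof.
  intros a_pos a_even l_cf.
  pose proof (fun m => cf_fin_even_upper_gap_third a a_pos a_even m 0) as even_cvgt.
  assert (even_lim : is_lim_seq (fun m => cf_fin a 0 (2 * m)) l).
  { apply (is_lim_seq_subseq (fun n => cf_fin a 0 n) l (fun m => 2 * m)%nat).
    - apply eventually_subseq. intros m. lia.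
    - apply is_lim_seq_Reals. exact l_cf. }
  split.
  - assert (above1 : eventually (fun m => 1 <= cf_fin a 0 (2 * m)))
      by (exists 0%nat; intros m _; apply even_cvgt).
    exact (is_lim_seq_le_loc _ _ 1 l above1 (is_lim_seq_const 1) even_lim).
  - refine (upper_gap_third_lim _ l _ even_lim). intros m. apply even_cvgt.
Qed.

Lemma quadratic_surd_periodic_cf c : (0 < c)%nat ->
  exists l, 1 <= l <= 2 /\ l = cf_cons1 c l /\
            - INR c + sqrt (INR c * (INR c + 4)) = 2 / l.
Proof.
  intros c_pos.
  assert (C_ge1 : 1 <= INR c) by (apply (le_INR 1); lia).
  set (C := INR c) in *.
  assert (w_sq : sqrt (C * (C + 4)) * sqrt (C * (C + 4)) = C * (C + 4))
    by (apply sqrt_sqrt; nra).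
  pose proof (sqrt_pos (C * (C + 4))) as sqrt_ge0.
  set (x := - C + sqrt (C * (C + 4))).
  assert (x_root : x * x + 2 * C * x = 4 * C) by (unfold x; nra).
  assert (x_ge1 : 1 <= x) by (unfold x in *; nra).
  exists (2 / x). split; [|split].
  - assert (x_le2 : x <= 2) by nra.
    split; apply (Rmult_le_reg_r x); try lra; unfold Rdiv;
      rewrite Rmult_assoc, Rinv_l; lra.
  - unfold cf_cons1. fold C.
    replace (/ (2 / x)) with (x / 2) by (field; lra).
    replace (/ (C + x / 2)) with (2 / (2 * C + x)) by (field; lra).
    apply (Rmult_eq_reg_r (x * (2 * C + x))); [|nra].
    field_simplify; lra.
  - field. lra.
Qed.

Theorem theorem5 :
  (forall (a : nat -> nat) (l : R),
      (forall i, (0 < a i)%nat) ->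
      (forall k, a (2 * k)%nat = 1%nat) ->
      cf_value a l ->
      forall n : nat, ~ in_A (exp (2 / l)) n) /\
  (forall c : nat, (0 < c)%nat ->
      forall n : nat,
        ~ in_A (exp (- INR c + sqrt (INR c * (INR c + 4)))) n).
Proof.
  split.
  - intros a l a_pos a_even l_cf n.
    destruct (cf_value_upper_gap_third a l a_pos a_even l_cf) as [l_ge1 gap].
    exact (not_in_A_of_upper_gap_third l n l_ge1 gap).
  - intros c c_pos n.
    destruct (quadratic_surd_periodic_cf c c_pos) as [l [l_in [l_fixed ->]]].
    apply not_in_A_of_upper_gap_third; [lra|].
    apply (upper_gap_third_cf_cons1_fixed c l c_pos); [lra | exact l_fixed].
Qed.
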